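(* The zero points of $\mathbf B$ on the unit sphere are exactly the two critical points of $U^\ast$ outside the equator circle $z=0$, namely the physical centers $\hat{\mathbf p}_0^\pm$ (the shapes of the regular, i.e. equilateral, triangle) on the hemispheres $z>0$ and $z<0$.
   Context: Masses $m_1,m_2,m_3>0$, $m_1+m_2+m_3=1$; $\hat m_1=m_2m_3$, $\hat m_2=m_3m_1$, $\hat m_3=m_1m_2$. The shape sphere (oriented m-triangles modulo rotation with $\sum m_i|\mathbf a_i|^2=1$, with kinematic metric, magnified by factor 2) is identified with the unit sphere $S^2\subset\mathbb R^3$, with the equator $z=0$ the collinear shapes, and $\hat{\mathbf b}_1,\hat{\mathbf b}_2,\hat{\mathbf b}_3$ the unit vectors on the equator representing the binary collision shapes $\mathbf a_2=\mathbf a_3$, $\mathbf a_3=\mathbf a_1$, $\mathbf a_1=\mathbf a_2$. In this picture the Newtonian potential $U=\sum_{i<j}m_im_j/|\mathbf a_i-\mathbf a_j|$ restricted to unit size is $U^\ast(\mathbf p)=\sum_{i=1}^3\frac{k_i}{|\mathbf p-\hat{\mathbf b}_i|}$ with $k_i=\frac{2\hat m_i^{3/2}}{\sqrt{1-m_i}}$, and $\mathbf B(\mathbf p)=\sum_{i=1}^3\frac{k_i\hat{\mathbf b}_i}{|\mathbf p-\hat{\mathbf b}_i|^3}\in\mathbb R^2\times\{0\}$ for $\mathbf p\in S^2$. *)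

From Stdlib Require Import Reals.
Open Scope R_scope.

Record V3 := mkV3 { vx : R; vy : R; vz : R }.

Definition vadd (p q : V3) : V3 := mkV3 (vx p + vx q) (vy p + vy q) (vz p + vz q).
Definition vsub (p q : V3) : V3 := mkV3 (vx p - vx q) (vy p - vy q) (vz p - vz q).
Definition vscale (a : R) (p : V3) : V3 := mkV3 (a * vx p) (a * vy p) (a * vz p).
Definition dot (p q : V3) : R := vx p * vx q + vy p * vy q + vz p * vz q.
Definition vnorm (p : V3) : R := sqrt (dot p p).
Definition vzero : V3 := mkV3 0 0 0.

Definition on_sphere (p : V3) : Prop := dot p p = 1.

Record Config := mkConfig
  { ax1 : R; ay1 : R; ax2 : R; ay2 : R; ax3 : R; ay3 : R }.

Definition normalized (m1 m2 m3 : R) (c : Config) : Prop :=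
  m1 * ax1 c + m2 * ax2 c + m3 * ax3 c = 0 /\
  m1 * ay1 c + m2 * ay2 c + m3 * ay3 c = 0 /\
  m1 * (ax1 c ^ 2 + ay1 c ^ 2) + m2 * (ax2 c ^ 2 + ay2 c ^ 2)
    + m3 * (ax3 c ^ 2 + ay3 c ^ 2) = 1.

(* The shape map to the unit sphere (Hopf map in mass-orthonormal Jacobi
   coordinates; kinematic metric magnified by 2).  With the real
   mass-orthonormal basis
     e1 = t (1-m1, -m1, -m1),  t = 1/sqrt(m1(1-m1)),
     e2 = s (0, m3, -m2),       s = 1/sqrt(m2 m3 (1-m1)),
   and complex coordinates z_j = sum_i m_i a_i (e_j)_i, the shape is
     (|z1|^2-|z2|^2, 2 Re(z1 conj z2), 2 Im(z1 conj z2)).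
   Collinear shapes are exactly those with third coordinate 0. *)
Definition shape (m1 m2 m3 : R) (c : Config) : V3 :=
  let t := / sqrt (m1 * (1 - m1)) in
  let s := / sqrt (m2 * m3 * (1 - m1)) in
  let e11 := t * (1 - m1) in let e12 := - (t * m1) in let e13 := - (t * m1) in
  let e21 := 0 in let e22 := s * m3 in let e23 := - (s * m2) in
  let z1r := m1 * ax1 c * e11 + m2 * ax2 c * e12 + m3 * ax3 c * e13 in
  let z1i := m1 * ay1 c * e11 + m2 * ay2 c * e12 + m3 * ay3 c * e13 in
  let z2r := m1 * ax1 c * e21 + m2 * ax2 c * e22 + m3 * ax3 c * e23 in
  let z2i := m1 * ay1 c * e21 + m2 * ay2 c * e22 + m3 * ay3 c * e23 in
  mkV3 (z1r ^ 2 + z1i ^ 2 - z2r ^ 2 - z2i ^ 2)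
       (2 * (z1r * z2r + z1i * z2i))
       (2 * (z1i * z2r - z1r * z2i)).

(* Normalized binary collision configurations (collinear, on the x-axis):
   a_j = a_k = -m_i tau, a_i = (1-m_i) tau, tau = 1/sqrt(m_i (1-m_i)). *)
Definition coll1 (m1 m2 m3 : R) : Config :=
  let tau := / sqrt (m1 * (1 - m1)) in
  mkConfig ((1 - m1) * tau) 0 (- (m1 * tau)) 0 (- (m1 * tau)) 0.
Definition coll2 (m1 m2 m3 : R) : Config :=
  let tau := / sqrt (m2 * (1 - m2)) in
  mkConfig (- (m2 * tau)) 0 ((1 - m2) * tau) 0 (- (m2 * tau)) 0.
Definition coll3 (m1 m2 m3 : R) : Config :=
  let tau := / sqrt (m3 * (1 - m3)) in
  mkConfig (- (m3 * tau)) 0 (- (m3 * tau)) 0 ((1 - m3) * tau) 0.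

Definition bhat1 (m1 m2 m3 : R) : V3 := shape m1 m2 m3 (coll1 m1 m2 m3).
Definition bhat2 (m1 m2 m3 : R) : V3 := shape m1 m2 m3 (coll2 m1 m2 m3).
Definition bhat3 (m1 m2 m3 : R) : V3 := shape m1 m2 m3 (coll3 m1 m2 m3).

Definition kcoef (mi mhat : R) : R := 2 * (mhat * sqrt mhat) / sqrt (1 - mi).
Definition k1 (m1 m2 m3 : R) : R := kcoef m1 (m2 * m3).
Definition k2 (m1 m2 m3 : R) : R := kcoef m2 (m3 * m1).
Definition k3 (m1 m2 m3 : R) : R := kcoef m3 (m1 * m2).

Definition Ustar (m1 m2 m3 : R) (p : V3) : R :=
  k1 m1 m2 m3 / vnorm (vsub p (bhat1 m1 m2 m3))
  + k2 m1 m2 m3 / vnorm (vsub p (bhat2 m1 m2 m3))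
  + k3 m1 m2 m3 / vnorm (vsub p (bhat3 m1 m2 m3)).

Definition Bvec (m1 m2 m3 : R) (p : V3) : V3 :=
  vadd (vscale (k1 m1 m2 m3 / vnorm (vsub p (bhat1 m1 m2 m3)) ^ 3) (bhat1 m1 m2 m3))
  (vadd (vscale (k2 m1 m2 m3 / vnorm (vsub p (bhat2 m1 m2 m3)) ^ 3) (bhat2 m1 m2 m3))
        (vscale (k3 m1 m2 m3 / vnorm (vsub p (bhat3 m1 m2 m3)) ^ 3) (bhat3 m1 m2 m3))).

(* p is a critical point of f restricted to the unit sphere: the derivative
   of f along every unit-speed great circle through p vanishes at p. *)
Definition sphere_critical (f : V3 -> R) (p : V3) : Prop :=
  forall v : V3, dot v p = 0 -> dot v v = 1 ->
    derivable_pt_lim (fun t => f (vadd (vscale (cos t) p) (vscale (sin t) v))) 0 0.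

Definition equilateral (c : Config) : Prop :=
  (ax1 c - ax2 c) ^ 2 + (ay1 c - ay2 c) ^ 2 = (ax2 c - ax3 c) ^ 2 + (ay2 c - ay3 c) ^ 2 /\
  (ax2 c - ax3 c) ^ 2 + (ay2 c - ay3 c) ^ 2 = (ax3 c - ax1 c) ^ 2 + (ay3 c - ay1 c) ^ 2.

Definition equilateral_shape (m1 m2 m3 : R) (p : V3) : Prop :=
  exists c : Config, normalized m1 m2 m3 c /\ equilateral c /\ shape m1 m2 m3 c = p.

From Stdlib Require Import Reals Lra Psatz.
From Coquelicot Require Import Coquelicot.
Open Scope R_scope.

(* In mass-orthonormal Jacobi coordinates the shape map is the Hopf map, so it maps normalized
   configurations onto the unit sphere and inner products of shapes are governed by the mass
   inner product.  In particular the squared chord from the shape of a normalized triangle to the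
   collision shape b_i is 4 m_j m_k / (1 - m_i) times the squared side r_jk^2, and Lagrange's
   identity turns this into sum_i (1 - m_i) |p - b_i|^2 = 4 on the sphere, i.e. into the relation
   sum_i (1 - m_i) b_i = 0.
   The equilateral shapes are therefore the points whose squared chords are proportional to these
   constants; the identity then fixes p.b_1 and p.b_2, leaving two points, mirror images in the
   equator.  The weights w_i = k_i / |p - b_i|^3 of B satisfy
   (w_i / (1 - m_i))^2 (|p - b_i|^2 (1 - m_i) / (4 m^_i))^3 = 1/16, and the b_i span the equator
   subject only to the relation above, so B(p) = 0 iff the w_i are proportional to 1 - m_i iff p is
   equilateral.  Finally, the derivative of U^* along the great circle through p with unit tangent v
   is B(p).v, and a horizontal vector orthogonal to the tangent plane at a point off the equator
   vanishes. *)

Lemma Rinv_sqrt_sq x : 0 < x -> / sqrt x * / sqrt x = / x.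
Proof. intros hx. rewrite <- Rinv_mult, sqrt_sqrt; lra. Qed.

Lemma Rinv_sqrt_pos x : 0 < x -> 0 < / sqrt x.
Proof. intros hx. apply Rinv_0_lt_compat, sqrt_lt_R0, hx. Qed.

Lemma pow_lt_compat_pos x y n : 0 < x < y -> (0 < n)%nat -> x ^ n < y ^ n.
Proof.
  intros [hx hxy] hn. induction n as [|n IH]; [lia|].
  destruct n as [|n]; [simpl; lra|].
  change (x * x ^ S n < y * y ^ S n).
  assert (0 < x ^ S n) by (apply pow_lt; lra).
  assert (x ^ S n < y ^ S n) by (apply IH; lia).
  nra.
Qed.

Lemma pow_inj_pos x y n : (0 < n)%nat -> 0 < x -> 0 < y -> x ^ n = y ^ n -> x = y.
Proof.
  intros hn hx hy e.
  destruct (Rtotal_order x y) as [lt | [eq | gt]]; [| exact eq |].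
  - pose proof (pow_lt_compat_pos x y n (conj hx lt) hn). lra.
  - pose proof (pow_lt_compat_pos y x n (conj hy gt) hn). lra.
Qed.

Lemma sq_cube_balance_eq_iff q q' r r' : 0 < q -> 0 < q' -> 0 < r -> 0 < r' ->
  q ^ 2 * r ^ 3 = q' ^ 2 * r' ^ 3 -> (q = q' <-> r = r').
Proof.
  intros hq hq' hr hr' e. split; intros <-.
  - apply (pow_inj_pos _ _ 3); [lia | assumption | assumption |].
    apply Rmult_eq_reg_l with (q ^ 2); [exact e |].
    apply pow_nonzero; lra.
  - apply (pow_inj_pos _ _ 2); [lia | assumption | assumption |].
    apply Rmult_eq_reg_r with (r ^ 3); [exact e |].
    apply pow_nonzero; lra.
Qed.

Lemma det2_kernel_trivial a b c d u v :
  a * d - b * c <> 0 -> u * a + v * b = 0 -> u * c + v * d = 0 -> u = 0 /\ v = 0.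
Proof.
  intros hdet e1 e2.
  assert (eu : u * (a * d - b * c) = 0) by
    (transitivity (d * (u * a + v * b) - b * (u * c + v * d)); [ring | rewrite e1, e2; ring]).
  assert (ev : v * (a * d - b * c) = 0) by
    (transitivity (a * (u * c + v * d) - c * (u * a + v * b)); [ring | rewrite e1, e2; ring]).
  apply Rmult_integral in eu, ev. split; tauto.
Qed.

Lemma lincomb3_eq0_iff_proportional a1 a2 a3 x1 y1 x2 y2 x3 y3 w1 w2 w3 :
  a1 <> 0 -> a2 <> 0 -> a3 <> 0 -> x1 * y2 - x2 * y1 <> 0 ->
  a1 * x1 + a2 * x2 + a3 * x3 = 0 -> a1 * y1 + a2 * y2 + a3 * y3 = 0 ->
  (w1 * x1 + w2 * x2 + w3 * x3 = 0 /\ w1 * y1 + w2 * y2 + w3 * y3 = 0 <->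
   w1 / a1 = w2 / a2 /\ w2 / a2 = w3 / a3).
Proof.
  intros h1 h2 h3 hdet hx hy. set (l := w3 / a3).
  assert (hw3 : w3 = l * a3) by (unfold l; field; exact h3).
  split.
  - intros [ex ey].
    destruct (det2_kernel_trivial x1 x2 y1 y2 (w1 - l * a1) (w2 - l * a2) hdet) as [e1 e2].
    + transitivity ((w1 * x1 + w2 * x2 + w3 * x3) - l * (a1 * x1 + a2 * x2 + a3 * x3));
        [rewrite hw3; ring | rewrite ex, hx; ring].
    + transitivity ((w1 * y1 + w2 * y2 + w3 * y3) - l * (a1 * y1 + a2 * y2 + a3 * y3));
        [rewrite hw3; ring | rewrite ey, hy; ring].
    + replace w1 with (l * a1) by lra. replace w2 with (l * a2) by lra.
      split; unfold l; field; auto.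
  - intros [e12 e23].
    assert (hw2 : w2 = l * a2) by (rewrite <- e23; field; exact h2).
    assert (hw1 : w1 = l * a1) by (rewrite <- e23, <- e12; field; exact h1).
    rewrite hw1, hw2, hw3.
    split; [rewrite <- (Rmult_0_r l), <- hx | rewrite <- (Rmult_0_r l), <- hy]; ring.
Qed.

Definition sqdist (p q : V3) : R := dot (vsub p q) (vsub p q).

Lemma vnorm_vsub p q : vnorm (vsub p q) = sqrt (sqdist p q).
Proof. reflexivity. Qed.

Lemma sqdist_pos p q : p <> q -> 0 < sqdist p q.
Proof.
  intros hne. destruct p as [x y z], q as [a b c]. unfold sqdist, dot, vsub; simpl.
  destruct (Req_dec x a), (Req_dec y b), (Req_dec z c); subst;
    [exfalso; apply hne; reflexivity | nra ..].
Qed.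

Lemma sqdist_on_sphere p q : on_sphere p -> on_sphere q -> sqdist p q = 2 - 2 * dot p q.
Proof.
  unfold on_sphere, sqdist. intros hp hq.
  transitivity (dot p p - 2 * dot p q + dot q q); [| rewrite hp, hq; ring].
  destruct p, q; unfold dot, vsub; simpl; ring.
Qed.

Lemma horizontal_eq0_iff q : vz q = 0 -> (q = vzero <-> vx q = 0 /\ vy q = 0).
Proof.
  destruct q as [x y z]; unfold vzero; cbn [vx vy vz]. intros ->.
  split; [intros e; injection e | intros [-> ->]]; auto.
Qed.

Definition mirror (p : V3) : V3 := mkV3 (vx p) (vy p) (- vz p).

Lemma equator_dots_determine_xy b1 b2 p q :
  vz b1 = 0 -> vz b2 = 0 -> vx b1 * vy b2 - vx b2 * vy b1 <> 0 ->
  dot p b1 = dot q b1 -> dot p b2 = dot q b2 -> vx p = vx q /\ vy p = vy q.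
Proof.
  unfold dot. intros z1 z2 hdet e1 e2. rewrite z1 in e1. rewrite z2 in e2.
  destruct (det2_kernel_trivial (vx b1) (vy b1) (vx b2) (vy b2) (vx p - vx q) (vy p - vy q))
    as [ex ey]; [rewrite (Rmult_comm (vy b1)); exact hdet | nra | nra | lra].
Qed.

Lemma on_sphere_mirror_cases p q :
  on_sphere p -> on_sphere q -> vx p = vx q -> vy p = vy q -> q = p \/ q = mirror p.
Proof.
  destruct p as [x y z], q as [x' y' z']; unfold on_sphere, dot, mirror; simpl.
  intros hp hq <- <-.
  assert (e : (z' - z) * (z' + z) = 0) by nra.
  apply Rmult_integral in e as [e | e]; [left | right]; f_equal; lra.
Qed.

Definition hopf (x1 y1 x2 y2 : R) : V3 :=
  mkV3 (x1 ^ 2 + y1 ^ 2 - x2 ^ 2 - y2 ^ 2) (2 * (x1 * x2 + y1 * y2)) (2 * (y1 * x2 - x1 * y2)).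

Lemma dot_hopf x1 y1 x2 y2 x1' y1' x2' y2' :
  dot (hopf x1 y1 x2 y2) (hopf x1' y1' x2' y2') =
  2 * ((x1 * x1' + y1 * y1' + x2 * x2' + y2 * y2') ^ 2
       + (y1 * x1' - x1 * y1' + y2 * x2' - x2 * y2') ^ 2)
  - (x1 * x1 + y1 * y1 + x2 * x2 + y2 * y2) * (x1' * x1' + y1' * y1' + x2' * x2' + y2' * y2').
Proof. unfold dot, hopf; simpl; ring. Qed.

Lemma hopf_surjective p : on_sphere p -> exists x1 y1 x2 y2, hopf x1 y1 x2 y2 = p.
Proof.
  destruct p as [px py pz]; unfold on_sphere, dot; simpl. intros hp.
  destruct (Req_dec px 1) as [-> | ne].
  - exists 1, 0, 0, 0. unfold hopf. assert (py = 0) by nra. assert (pz = 0) by nra.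
    subst; f_equal; ring.
  - assert (hlt : px < 1) by nra.
    set (w := sqrt ((1 - px) / 2)).
    assert (hw : 0 < w) by (apply sqrt_lt_R0; lra).
    assert (hw2 : w * w = (1 - px) / 2) by (apply sqrt_sqrt; lra).
    exists (py / (2 * w)), (pz / (2 * w)), w, 0. unfold hopf. f_equal; [| field; lra | field; lra].
    replace ((py / (2 * w)) ^ 2 + (pz / (2 * w)) ^ 2) with ((py * py + pz * pz) / (4 * (w * w)))
      by (field; lra).
    rewrite hw2. replace (py * py + pz * pz) with ((1 - px) * (1 + px)) by lra.
    replace (w ^ 2) with (w * w) by ring. rewrite hw2. field. lra.
Qed.

Lemma dot_eq0_of_unit_tangents B p :
  (forall v, dot v p = 0 -> dot v v = 1 -> dot B v = 0) ->
  forall w, dot w p = 0 -> dot B w = 0.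
Proof.
  intros hB w hwp.
  destruct (Req_dec (dot w w) 0) as [e | ne].
  - destruct w as [a b c]; unfold dot in *; simpl in *.
    assert (a = 0) by nra. assert (b = 0) by nra. assert (c = 0) by nra. subst; ring.
  - assert (hpos : 0 < dot w w) by (destruct w; unfold dot in *; simpl in *; nra).
    set (n := sqrt (dot w w)).
    assert (hn : 0 < n) by (apply sqrt_lt_R0; exact hpos).
    assert (hn2 : n * n = dot w w) by (apply sqrt_sqrt; lra).
    assert (e : dot B (vscale (/ n) w) = 0).
    { apply hB.
      - destruct w as [a b c], p as [x y z]; unfold dot, vscale in *; simpl in *.
        transitivity (/ n * (a * x + b * y + c * z)); [ring | rewrite hwp; ring].
      - transitivity (dot w w / (n * n)).
        + destruct w; unfold dot, vscale; simpl. field. lra.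
        + rewrite hn2. field. lra. }
    replace (dot B w) with (dot B (vscale (/ n) w) * n)
      by (destruct B, w; unfold dot, vscale; simpl; field; lra).
    rewrite e. ring.
Qed.

(* The tangent vector (B_x, B_y, -(B_x p_x + B_y p_y) / p_z) pairs with B to B_x^2 + B_y^2. *)
Lemma horizontal_normal_eq0 B p : vz p <> 0 -> vz B = 0 ->
  (forall w, dot w p = 0 -> dot B w = 0) -> B = vzero.
Proof.
  destruct B as [Bx By Bz], p as [px py pz]; unfold dot, vzero; simpl. intros hz -> hB.
  pose proof (hB (mkV3 Bx By (- (Bx * px + By * py) / pz))) as e; simpl in e.
  assert (Bx * Bx + By * By = 0) by (rewrite <- e; field; exact hz).
  f_equal; nra.
Qed.

Lemma great_circle_inv_dist_derivative k p v b : 0 < sqdist p b ->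
  derivable_pt_lim (fun t => k / vnorm (vsub (vadd (vscale (cos t) p) (vscale (sin t) v)) b)) 0
    (k * (dot b v - dot p v) / vnorm (vsub p b) ^ 3).
Proof.
  intros hD. unfold sqdist in hD.
  destruct p as [p1 p2 p3], v as [v1 v2 v3], b as [b1 b2 b3].
  unfold vnorm, dot, vsub, vadd, vscale in *; simpl in *.
  apply is_derive_Reals.
  set (D := (p1 - b1) * (p1 - b1) + (p2 - b2) * (p2 - b2) + (p3 - b3) * (p3 - b3)) in *.
  assert (eD : (cos 0 * p1 + sin 0 * v1 + - b1) * (cos 0 * p1 + sin 0 * v1 + - b1) +
       (cos 0 * p2 + sin 0 * v2 + - b2) * (cos 0 * p2 + sin 0 * v2 + - b2) +
       (cos 0 * p3 + sin 0 * v3 + - b3) * (cos 0 * p3 + sin 0 * v3 + - b3) = D)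
    by (rewrite cos_0, sin_0; unfold D; ring).
  assert (hr : 0 < sqrt D) by (apply sqrt_lt_R0; lra).
  auto_derive.
  - rewrite eD. repeat split; lra.
  - rewrite eD, cos_0, sin_0. field. lra.
Qed.

Definition chord_scale (mi mhat : R) : R := 4 * mhat / (1 - mi).

Lemma chord_scale_pos mi mhat : mi < 1 -> 0 < mhat -> 0 < chord_scale mi mhat.
Proof. intros. unfold chord_scale. apply Rdiv_lt_0_compat; lra. Qed.

Lemma chord_scale_weighted mi mhat r : mi < 1 ->
  (1 - mi) * (chord_scale mi mhat * r) = 4 * mhat * r.
Proof. intros. unfold chord_scale. field. lra. Qed.

Lemma kcoef_pos mi mhat : 0 < mi < 1 -> 0 < mhat -> 0 < kcoef mi mhat.
Proof.
  intros. unfold kcoef.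
  assert (0 < sqrt mhat) by (apply sqrt_lt_R0; lra).
  assert (0 < sqrt (1 - mi)) by (apply sqrt_lt_R0; lra).
  apply Rdiv_lt_0_compat; nra.
Qed.

(* The powers of m^_i and of D in k_i / |p - b_i|^3 cancel exactly, so the balance is constant. *)
Lemma kcoef_weight_balance mi mhat D : 0 < mi < 1 -> 0 < mhat -> 0 < D ->
  (kcoef mi mhat / sqrt D ^ 3 / (1 - mi)) ^ 2 * (D / chord_scale mi mhat) ^ 3 = 1 / 16.
Proof.
  intros hi hh hD. unfold kcoef, chord_scale.
  assert (ha : sqrt mhat * sqrt mhat = mhat) by (apply sqrt_sqrt; lra).
  assert (hb : sqrt (1 - mi) * sqrt (1 - mi) = 1 - mi) by (apply sqrt_sqrt; lra).
  assert (hr : sqrt D * sqrt D = D) by (apply sqrt_sqrt; lra).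
  assert (0 < sqrt mhat) by (apply sqrt_lt_R0; lra).
  assert (0 < sqrt (1 - mi)) by (apply sqrt_lt_R0; lra).
  assert (0 < sqrt D) by (apply sqrt_lt_R0; lra).
  set (a := sqrt mhat) in *. set (b := sqrt (1 - mi)) in *. set (r := sqrt D) in *.
  clearbody a b r. rewrite <- ha, <- hb, <- hr. field. lra.
Qed.

Lemma kcoef_weight_pos mi mhat D : 0 < mi < 1 -> 0 < mhat -> 0 < D ->
  0 < kcoef mi mhat / sqrt D ^ 3 / (1 - mi).
Proof.
  intros hi hh hD. pose proof (kcoef_pos mi mhat hi hh).
  assert (0 < sqrt D) by (apply sqrt_lt_R0; lra).
  apply Rdiv_lt_0_compat; [apply Rdiv_lt_0_compat, pow_lt |]; lra.
Qed.

Lemma inverse_cube_weight_balance mi mhat p b : 0 < mi < 1 -> 0 < mhat -> p <> b ->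
  let q := kcoef mi mhat / vnorm (vsub p b) ^ 3 / (1 - mi) in
  0 < q /\ 0 < sqdist p b / chord_scale mi mhat
  /\ q ^ 2 * (sqdist p b / chord_scale mi mhat) ^ 3 = 1 / 16.
Proof.
  intros hi hh hne q. pose proof (sqdist_pos p b hne). unfold q. rewrite vnorm_vsub.
  repeat split.
  - apply kcoef_weight_pos; assumption.
  - apply Rdiv_lt_0_compat; [assumption | apply chord_scale_pos; lra].
  - apply kcoef_weight_balance; assumption.
Qed.

Lemma com_pairing_identity m1 m2 m3 x1 x2 x3 y1 y2 y3 :
  m1 + m2 + m3 = 1 -> m1 * x1 + m2 * x2 + m3 * x3 = 0 -> m1 * y1 + m2 * y2 + m3 * y3 = 0 ->
  (1 - m1) * (m1 * x1 * y1 + m2 * x2 * y2 + m3 * x3 * y3)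
  = m1 * x1 * y1 + m2 * m3 * ((x2 - x3) * (y2 - y3)).
Proof.
  intros hm hx hy.
  transitivity (m1 * x1 * y1 + m2 * m3 * ((x2 - x3) * (y2 - y3))
    + (m1 * x1 + m2 * x2 + m3 * x3) * (m1 * y1 + m2 * y2 + m3 * y3)
    - (m1 * x1 + m2 * x2 + m3 * x3) * (m1 * y1) - (m1 * x1) * (m1 * y1 + m2 * y2 + m3 * y3)
    + (1 - (m1 + m2 + m3)) * (m2 * x2 * y2 + m3 * x3 * y3)).
  - ring.
  - rewrite hx, hy, hm. ring.
Qed.

Definition coll_scale (mi : R) : R := / sqrt (mi * (1 - mi)).

Lemma coll_scale_sq mi : 0 < mi < 1 -> coll_scale mi * coll_scale mi = / (mi * (1 - mi)).
Proof. intros. apply Rinv_sqrt_sq. nra. Qed.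

Lemma coll_scale_pos mi : 0 < mi < 1 -> 0 < coll_scale mi.
Proof. intros. apply Rinv_sqrt_pos. nra. Qed.

Lemma collision_centered mi mj mk t : mi + mj + mk = 1 ->
  mi * ((1 - mi) * t) + mj * - (mi * t) + mk * - (mi * t) = 0.
Proof. intros hm. transitivity (mi * t * (1 - (mi + mj + mk))); [ring | rewrite hm; ring]. Qed.

Lemma collision_mass_norm mi mj mk : 0 < mi < 1 -> mi + mj + mk = 1 ->
  mi * ((1 - mi) * coll_scale mi) ^ 2 + (mj + mk) * (mi * coll_scale mi) ^ 2 = 1.
Proof.
  intros hi hm. replace (mj + mk) with (1 - mi) by lra.
  transitivity (coll_scale mi * coll_scale mi * (mi * (1 - mi))); [ring |].
  rewrite coll_scale_sq by exact hi. field. lra.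
Qed.

Lemma collision_pairing mi mj mk xi xj xk t : mi * xi + mj * xj + mk * xk = 0 ->
  mi * (xi * ((1 - mi) * t)) + mj * (xj * - (mi * t)) + mk * (xk * - (mi * t)) = t * mi * xi.
Proof.
  intros hx. transitivity (t * mi * xi - t * mi * (mi * xi + mj * xj + mk * xk)); [ring |].
  rewrite hx. ring.
Qed.

(* The left side is the squared chord |shape c - b_i|^2 as given by [sqdist_shape] below. *)
Lemma collision_sqdist_identity mi mj mk xi yi xj yj xk yk :
  0 < mi < 1 -> mi + mj + mk = 1 ->
  mi * xi + mj * xj + mk * xk = 0 -> mi * yi + mj * yj + mk * yk = 0 ->
  mi * (xi ^ 2 + yi ^ 2) + mj * (xj ^ 2 + yj ^ 2) + mk * (xk ^ 2 + yk ^ 2) = 1 ->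
  4 - 4 * ((coll_scale mi * mi * xi) ^ 2 + (coll_scale mi * mi * yi) ^ 2)
  = chord_scale mi (mj * mk) * ((xj - xk) ^ 2 + (yj - yk) ^ 2).
Proof.
  intros hi hm hx hy hN.
  pose proof (com_pairing_identity mi mj mk xi xj xk xi xj xk hm hx hx) as ex.
  pose proof (com_pairing_identity mi mj mk yi yj yk yi yj yk hm hy hy) as ey.
  assert (hr : mj * mk * ((xj - xk) ^ 2 + (yj - yk) ^ 2) = 1 - mi - mi * (xi ^ 2 + yi ^ 2)).
  { replace (1 - mi) with
      ((1 - mi) * (mi * (xi ^ 2 + yi ^ 2) + mj * (xj ^ 2 + yj ^ 2) + mk * (xk ^ 2 + yk ^ 2)))
      by (rewrite hN; ring).
    lra. }
  transitivity (4 - 4 * (coll_scale mi * coll_scale mi) * (mi * mi) * (xi ^ 2 + yi ^ 2)); [ring |].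
  unfold chord_scale. rewrite coll_scale_sq by exact hi.
  replace (4 * (mj * mk) / (1 - mi) * ((xj - xk) ^ 2 + (yj - yk) ^ 2))
    with (4 * (mj * mk * ((xj - xk) ^ 2 + (yj - yk) ^ 2)) / (1 - mi)) by (field; lra).
  rewrite hr. field. lra.
Qed.

Section ShapeSphere.

Variables m1 m2 m3 : R.
Hypotheses (hm1 : 0 < m1) (hm2 : 0 < m2) (hm3 : 0 < m3) (hsum : m1 + m2 + m3 = 1).

Let m1_lt_1 : m1 < 1. Proof. lra. Qed.
Let m2_lt_1 : m2 < 1. Proof. lra. Qed.
Let m3_lt_1 : m3 < 1. Proof. lra. Qed.
Let m23_pos : 0 < m2 * m3. Proof. nra. Qed.
Let m31_pos : 0 < m3 * m1. Proof. nra. Qed.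
Let m12_pos : 0 < m1 * m2. Proof. nra. Qed.

Local Notation shp := (shape m1 m2 m3).
Local Notation b1 := (bhat1 m1 m2 m3).
Local Notation b2 := (bhat2 m1 m2 m3).
Local Notation b3 := (bhat3 m1 m2 m3).

Definition centered (c : Config) : Prop :=
  m1 * ax1 c + m2 * ax2 c + m3 * ax3 c = 0 /\ m1 * ay1 c + m2 * ay2 c + m3 * ay3 c = 0.

Definition mass_dot (c c' : Config) : R :=
  m1 * (ax1 c * ax1 c' + ay1 c * ay1 c') + m2 * (ax2 c * ax2 c' + ay2 c * ay2 c')
  + m3 * (ax3 c * ax3 c' + ay3 c * ay3 c').

Definition mass_cross (c c' : Config) : R :=
  m1 * (ay1 c * ax1 c' - ax1 c * ay1 c') + m2 * (ay2 c * ax2 c' - ax2 c * ay2 c')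
  + m3 * (ay3 c * ax3 c' - ax3 c * ay3 c').

Lemma centered_normalized c : normalized m1 m2 m3 c -> centered c.
Proof. intros [hx [hy _]]. split; assumption. Qed.

Lemma mass_dot_normalized c : normalized m1 m2 m3 c -> mass_dot c c = 1.
Proof. intros [_ [_ hN]]. rewrite <- hN. unfold mass_dot. ring. Qed.

Lemma mass_cross_self c : mass_cross c c = 0.
Proof. unfold mass_cross. ring. Qed.

Definition jscale2 : R := / sqrt (m2 * m3 * (1 - m1)).

Lemma jscale2_sq : jscale2 * jscale2 = / (m2 * m3 * (1 - m1)).
Proof. apply Rinv_sqrt_sq. nra. Qed.

Lemma jscale2_pos : 0 < jscale2.
Proof. apply Rinv_sqrt_pos. nra. Qed.

(* The Jacobi coordinates (z_1, z_2) behind [shape], for a centered configuration, where only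
   the a_1 part of z_1 survives. *)
Definition jacobi1x (c : Config) : R := coll_scale m1 * m1 * ax1 c.
Definition jacobi1y (c : Config) : R := coll_scale m1 * m1 * ay1 c.
Definition jacobi2x (c : Config) : R := jscale2 * (m2 * m3) * (ax2 c - ax3 c).
Definition jacobi2y (c : Config) : R := jscale2 * (m2 * m3) * (ay2 c - ay3 c).

Lemma jacobi_pairing x1 x2 x3 y1 y2 y3 :
  m1 * x1 + m2 * x2 + m3 * x3 = 0 -> m1 * y1 + m2 * y2 + m3 * y3 = 0 ->
  coll_scale m1 * m1 * x1 * (coll_scale m1 * m1 * y1)
  + jscale2 * (m2 * m3) * (x2 - x3) * (jscale2 * (m2 * m3) * (y2 - y3))
  = m1 * x1 * y1 + m2 * x2 * y2 + m3 * x3 * y3.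
Proof.
  intros hx hy. apply Rmult_eq_reg_l with (1 - m1); [| lra].
  rewrite (com_pairing_identity m1 m2 m3 x1 x2 x3 y1 y2 y3 hsum hx hy).
  transitivity ((1 - m1) * (coll_scale m1 * coll_scale m1) * (m1 * m1) * (x1 * y1)
    + (1 - m1) * (jscale2 * jscale2) * ((m2 * m3) * (m2 * m3)) * ((x2 - x3) * (y2 - y3))); [ring |].
  rewrite coll_scale_sq, jscale2_sq by lra. field. repeat split; lra.
Qed.

Lemma mass_dot_jacobi c c' : centered c -> centered c' ->
  jacobi1x c * jacobi1x c' + jacobi1y c * jacobi1y c' + jacobi2x c * jacobi2x c'
  + jacobi2y c * jacobi2y c' = mass_dot c c'.
Proof.
  intros [hx hy] [hx' hy'].
  pose proof (jacobi_pairing _ _ _ _ _ _ hx hx'). pose proof (jacobi_pairing _ _ _ _ _ _ hy hy').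
  unfold jacobi1x, jacobi1y, jacobi2x, jacobi2y, mass_dot. lra.
Qed.

Lemma mass_cross_jacobi c c' : centered c -> centered c' ->
  jacobi1y c * jacobi1x c' - jacobi1x c * jacobi1y c' + jacobi2y c * jacobi2x c'
  - jacobi2x c * jacobi2y c' = mass_cross c c'.
Proof.
  intros [hx hy] [hx' hy'].
  pose proof (jacobi_pairing _ _ _ _ _ _ hy hx'). pose proof (jacobi_pairing _ _ _ _ _ _ hx hy').
  unfold jacobi1x, jacobi1y, jacobi2x, jacobi2y, mass_cross. lra.
Qed.

Lemma shape_centered c : centered c ->
  shp c = hopf (jacobi1x c) (jacobi1y c) (jacobi2x c) (jacobi2y c).
Proof.
  intros [hx hy]. unfold shape, hopf. cbv zeta. fold (coll_scale m1) jscale2.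
  unfold jacobi1x, jacobi1y, jacobi2x, jacobi2y.
  assert (e1 : forall z1 z2 z3, m1 * z1 * (coll_scale m1 * (1 - m1))
      + m2 * z2 * - (coll_scale m1 * m1) + m3 * z3 * - (coll_scale m1 * m1)
      = coll_scale m1 * m1 * z1 - coll_scale m1 * m1 * (m1 * z1 + m2 * z2 + m3 * z3))
    by (intros; ring).
  assert (e2 : forall z1 z2 z3, m1 * z1 * 0 + m2 * z2 * (jscale2 * m3) + m3 * z3 * - (jscale2 * m2)
      = jscale2 * (m2 * m3) * (z2 - z3)) by (intros; ring).
  rewrite !e1, !e2, hx, hy. f_equal; ring.
Qed.

Lemma dot_shape c c' : centered c -> centered c' ->
  dot (shp c) (shp c')
  = 2 * (mass_dot c c' ^ 2 + mass_cross c c' ^ 2) - mass_dot c c * mass_dot c' c'.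
Proof.
  intros hc hc'.
  rewrite (shape_centered c hc), (shape_centered c' hc'), dot_hopf.
  rewrite (mass_dot_jacobi c c' hc hc'), (mass_cross_jacobi c c' hc hc'),
    (mass_dot_jacobi c c hc hc), (mass_dot_jacobi c' c' hc' hc').
  reflexivity.
Qed.

Lemma on_sphere_shape c : normalized m1 m2 m3 c -> on_sphere (shp c).
Proof.
  intros hc. pose proof (centered_normalized c hc) as hc0. unfold on_sphere.
  rewrite dot_shape, mass_cross_self, mass_dot_normalized by assumption. ring.
Qed.

Lemma sqdist_shape c c' : normalized m1 m2 m3 c -> normalized m1 m2 m3 c' ->
  sqdist (shp c) (shp c') = 4 - 4 * (mass_dot c c' ^ 2 + mass_cross c c' ^ 2).
Proof.
  intros hc hc'.
  pose proof (centered_normalized c hc). pose proof (centered_normalized c' hc').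
  rewrite sqdist_on_sphere by (apply on_sphere_shape; assumption).
  rewrite dot_shape, !mass_dot_normalized by assumption. ring.
Qed.

Lemma shape_of_jacobi x1 y1 x2 y2 : exists c, centered c /\ shp c = hopf x1 y1 x2 y2.
Proof.
  set (t := coll_scale m1). set (s := jscale2).
  set (c := mkConfig (x1 * (t * (1 - m1))) (y1 * (t * (1 - m1)))
                     (- (x1 * (t * m1)) + x2 * (s * m3)) (- (y1 * (t * m1)) + y2 * (s * m3))
                     (- (x1 * (t * m1)) - x2 * (s * m2)) (- (y1 * (t * m1)) - y2 * (s * m2))).
  assert (hc : centered c).
  { unfold centered, c; simpl. split.
    - transitivity (x1 * t * m1 * (1 - (m1 + m2 + m3))); [ring | rewrite hsum; ring].
    - transitivity (y1 * t * m1 * (1 - (m1 + m2 + m3))); [ring | rewrite hsum; ring]. }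
  exists c. split; [exact hc |]. rewrite shape_centered by exact hc.
  assert (ht : t * t * (m1 * (1 - m1)) = 1)
    by (unfold t; rewrite coll_scale_sq by lra; field; lra).
  assert (hs : s * s * (m2 * m3 * (m2 + m3)) = 1)
    by (unfold s; rewrite jscale2_sq; replace (m2 + m3) with (1 - m1) by lra; field; lra).
  unfold jacobi1x, jacobi1y, jacobi2x, jacobi2y, c; simpl. fold t s. f_equal.
  - transitivity (x1 * (t * t * (m1 * (1 - m1)))); [ring | rewrite ht; ring].
  - transitivity (y1 * (t * t * (m1 * (1 - m1)))); [ring | rewrite ht; ring].
  - transitivity (x2 * (s * s * (m2 * m3 * (m2 + m3)))); [ring | rewrite hs; ring].
  - transitivity (y2 * (s * s * (m2 * m3 * (m2 + m3)))); [ring | rewrite hs; ring].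
Qed.

Lemma shape_surjective p : on_sphere p -> exists c, normalized m1 m2 m3 c /\ shp c = p.
Proof.
  intros hp.
  destruct (hopf_surjective p hp) as (x1 & y1 & x2 & y2 & hz).
  destruct (shape_of_jacobi x1 y1 x2 y2) as (c & hc & hs).
  exists c. split; [| congruence].
  assert (hG : mass_dot c c ^ 2 = 1).
  { unfold on_sphere in hp. rewrite <- hz, <- hs, dot_shape, mass_cross_self in hp by exact hc.
    lra. }
  assert (0 <= mass_dot c c) by (unfold mass_dot; nra).
  destruct hc as [hx hy]. split; [exact hx | split; [exact hy |]].
  assert (mass_dot c c = 1) by nra.
  unfold mass_dot in *. lra.
Qed.

Lemma normalized_collisions :
  normalized m1 m2 m3 (coll1 m1 m2 m3) /\ normalized m1 m2 m3 (coll2 m1 m2 m3)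
  /\ normalized m1 m2 m3 (coll3 m1 m2 m3).
Proof.
  pose proof (collision_centered m1 m2 m3 (coll_scale m1) hsum).
  pose proof (collision_centered m2 m3 m1 (coll_scale m2) ltac:(lra)).
  pose proof (collision_centered m3 m1 m2 (coll_scale m3) ltac:(lra)).
  pose proof (collision_mass_norm m1 m2 m3 ltac:(lra) hsum).
  pose proof (collision_mass_norm m2 m3 m1 ltac:(lra) ltac:(lra)).
  pose proof (collision_mass_norm m3 m1 m2 ltac:(lra) ltac:(lra)).
  unfold normalized, coll1, coll2, coll3, coll_scale in *; simpl.
  repeat split; lra.
Qed.

Lemma mass_pairing_coll1 c : centered c ->
  mass_dot c (coll1 m1 m2 m3) = coll_scale m1 * m1 * ax1 c
  /\ mass_cross c (coll1 m1 m2 m3) = coll_scale m1 * m1 * ay1 c.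
Proof.
  intros [hx hy].
  pose proof (collision_pairing m1 m2 m3 (ax1 c) (ax2 c) (ax3 c) (coll_scale m1) hx).
  pose proof (collision_pairing m1 m2 m3 (ay1 c) (ay2 c) (ay3 c) (coll_scale m1) hy).
  unfold mass_dot, mass_cross, coll1, coll_scale in *; simpl. split; lra.
Qed.

Lemma mass_pairing_coll2 c : centered c ->
  mass_dot c (coll2 m1 m2 m3) = coll_scale m2 * m2 * ax2 c
  /\ mass_cross c (coll2 m1 m2 m3) = coll_scale m2 * m2 * ay2 c.
Proof.
  intros [hx hy].
  pose proof (collision_pairing m2 m3 m1 (ax2 c) (ax3 c) (ax1 c) (coll_scale m2) ltac:(lra)).
  pose proof (collision_pairing m2 m3 m1 (ay2 c) (ay3 c) (ay1 c) (coll_scale m2) ltac:(lra)).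
  unfold mass_dot, mass_cross, coll2, coll_scale in *; simpl. split; lra.
Qed.

Lemma mass_pairing_coll3 c : centered c ->
  mass_dot c (coll3 m1 m2 m3) = coll_scale m3 * m3 * ax3 c
  /\ mass_cross c (coll3 m1 m2 m3) = coll_scale m3 * m3 * ay3 c.
Proof.
  intros [hx hy].
  pose proof (collision_pairing m3 m1 m2 (ax3 c) (ax1 c) (ax2 c) (coll_scale m3) ltac:(lra)).
  pose proof (collision_pairing m3 m1 m2 (ay3 c) (ay1 c) (ay2 c) (coll_scale m3) ltac:(lra)).
  unfold mass_dot, mass_cross, coll3, coll_scale in *; simpl. split; lra.
Qed.

Lemma sqdist_shape_bhat1 c : normalized m1 m2 m3 c ->
  sqdist (shp c) b1 = chord_scale m1 (m2 * m3) * ((ax2 c - ax3 c) ^ 2 + (ay2 c - ay3 c) ^ 2).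
Proof.
  intros hc. destruct normalized_collisions as [hcoll _].
  unfold bhat1. rewrite sqdist_shape by assumption.
  destruct (mass_pairing_coll1 c (centered_normalized c hc)) as [-> ->].
  destruct hc as [hx [hy hN]].
  apply collision_sqdist_identity; lra.
Qed.

Lemma sqdist_shape_bhat2 c : normalized m1 m2 m3 c ->
  sqdist (shp c) b2 = chord_scale m2 (m3 * m1) * ((ax3 c - ax1 c) ^ 2 + (ay3 c - ay1 c) ^ 2).
Proof.
  intros hc. destruct normalized_collisions as [_ [hcoll _]].
  unfold bhat2. rewrite sqdist_shape by assumption.
  destruct (mass_pairing_coll2 c (centered_normalized c hc)) as [-> ->].
  destruct hc as [hx [hy hN]].
  apply collision_sqdist_identity; lra.
Qed.

Lemma sqdist_shape_bhat3 c : normalized m1 m2 m3 c ->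
  sqdist (shp c) b3 = chord_scale m3 (m1 * m2) * ((ax1 c - ax2 c) ^ 2 + (ay1 c - ay2 c) ^ 2).
Proof.
  intros hc. destruct normalized_collisions as [_ [_ hcoll]].
  unfold bhat3. rewrite sqdist_shape by assumption.
  destruct (mass_pairing_coll3 c (centered_normalized c hc)) as [-> ->].
  destruct hc as [hx [hy hN]].
  apply collision_sqdist_identity; lra.
Qed.

Definition sides_equal (p : V3) : Prop :=
  sqdist p b1 / chord_scale m1 (m2 * m3) = sqdist p b2 / chord_scale m2 (m3 * m1)
  /\ sqdist p b2 / chord_scale m2 (m3 * m1) = sqdist p b3 / chord_scale m3 (m1 * m2).

Lemma sides_equal_shape c : normalized m1 m2 m3 c -> (sides_equal (shp c) <-> equilateral c).
Proof.
  intros hc. unfold sides_equal, equilateral.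
  rewrite sqdist_shape_bhat1, sqdist_shape_bhat2, sqdist_shape_bhat3 by exact hc.
  rewrite !Rmult_div_r by (apply Rgt_not_eq, chord_scale_pos; lra).
  split; intros [e1 e2]; split; lra.
Qed.

Lemma equilateral_shape_iff p : equilateral_shape m1 m2 m3 p <-> on_sphere p /\ sides_equal p.
Proof.
  split.
  - intros (c & hc & he & <-).
    split; [apply on_sphere_shape | apply sides_equal_shape]; assumption.
  - intros [hp hs]. destruct (shape_surjective p hp) as (c & hc & <-).
    exists c. split; [exact hc | split; [apply sides_equal_shape |]; auto].
Qed.

Lemma vz_shape_collinear c : ay1 c = 0 -> ay2 c = 0 -> ay3 c = 0 -> vz (shp c) = 0.
Proof. intros e1 e2 e3. unfold shape; cbv zeta; simpl. rewrite e1, e2, e3. ring. Qed.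

Lemma vz_bhat : vz b1 = 0 /\ vz b2 = 0 /\ vz b3 = 0.
Proof. repeat split; apply vz_shape_collinear; reflexivity. Qed.

Lemma neq_bhat_of_vz p : vz p <> 0 -> p <> b1 /\ p <> b2 /\ p <> b3.
Proof.
  destruct vz_bhat as (z1 & z2 & z3).
  intros hz; repeat split; intros ->; contradiction.
Qed.

Lemma on_sphere_bhat : on_sphere b1 /\ on_sphere b2 /\ on_sphere b3.
Proof.
  destruct normalized_collisions as (h1 & h2 & h3).
  repeat split; apply on_sphere_shape; assumption.
Qed.

Lemma vy_bhat1 : vy b1 = 0.
Proof.
  destruct normalized_collisions as [hc _]. unfold bhat1.
  rewrite shape_centered by (apply centered_normalized, hc).
  unfold hopf, jacobi1x, jacobi1y, jacobi2x, jacobi2y, coll1; simpl. ring.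
Qed.

Lemma vy_bhat2_neg : vy b2 < 0.
Proof.
  destruct normalized_collisions as [_ [hc _]]. unfold bhat2.
  rewrite shape_centered by (apply centered_normalized, hc).
  unfold hopf, jacobi1x, jacobi1y, jacobi2x, jacobi2y, coll2; simpl. fold (coll_scale m2).
  pose proof (coll_scale_pos m1 ltac:(lra)). pose proof (coll_scale_pos m2 ltac:(lra)).
  pose proof jscale2_pos.
  set (u := coll_scale m1 * jscale2 * (coll_scale m2 * coll_scale m2)).
  assert (0 < u) by (unfold u; repeat apply Rmult_lt_0_compat; assumption).
  assert (0 < m1 * (m2 * m2) * m3) by (repeat apply Rmult_lt_0_compat; assumption).
  match goal with
  |- ?a < 0 => replace a with (- (2 * u * (m1 * (m2 * m2) * m3))) by (unfold u; ring)
  end.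
  nra.
Qed.

Lemma bhat12_independent : vx b1 * vy b2 - vx b2 * vy b1 <> 0.
Proof.
  destruct on_sphere_bhat as [s1 _]. destruct vz_bhat as [z1 _].
  pose proof vy_bhat2_neg. unfold on_sphere, dot in s1.
  rewrite vy_bhat1, z1 in *. intros e.
  assert (e' : vx b1 * vy b2 = 0) by lra.
  apply Rmult_integral in e' as [e' | e']; [rewrite e' in s1 |]; lra.
Qed.

(* Lagrange's identity: sum m_j m_k r_jk^2 = (sum m_i) (sum m_i |a_i|^2) - |sum m_i a_i|^2. *)
Lemma sum_mass_sides c : normalized m1 m2 m3 c ->
  m2 * m3 * ((ax2 c - ax3 c) ^ 2 + (ay2 c - ay3 c) ^ 2)
  + m3 * m1 * ((ax3 c - ax1 c) ^ 2 + (ay3 c - ay1 c) ^ 2)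
  + m1 * m2 * ((ax1 c - ax2 c) ^ 2 + (ay1 c - ay2 c) ^ 2) = 1.
Proof.
  intros [hx [hy hN]].
  transitivity ((m1 + m2 + m3)
      * (m1 * (ax1 c ^ 2 + ay1 c ^ 2) + m2 * (ax2 c ^ 2 + ay2 c ^ 2) + m3 * (ax3 c ^ 2 + ay3 c ^ 2))
    - ((m1 * ax1 c + m2 * ax2 c + m3 * ax3 c) ^ 2 + (m1 * ay1 c + m2 * ay2 c + m3 * ay3 c) ^ 2));
    [ring | rewrite hsum, hx, hy, hN; ring].
Qed.

Lemma weighted_sqdist_bhat p : on_sphere p ->
  (1 - m1) * sqdist p b1 + (1 - m2) * sqdist p b2 + (1 - m3) * sqdist p b3 = 4.
Proof.
  intros hp. destruct (shape_surjective p hp) as (c & hc & <-).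
  rewrite sqdist_shape_bhat1, sqdist_shape_bhat2, sqdist_shape_bhat3 by exact hc.
  rewrite !chord_scale_weighted by lra.
  pose proof (sum_mass_sides c hc). lra.
Qed.

(* Since sum (1 - m_i) = 2, the previous identity reads p . sum (1 - m_i) b_i = 0 on the sphere. *)
Lemma bhat_weighted_sum :
  (1 - m1) * vx b1 + (1 - m2) * vx b2 + (1 - m3) * vx b3 = 0
  /\ (1 - m1) * vy b1 + (1 - m2) * vy b2 + (1 - m3) * vy b3 = 0.
Proof.
  assert (hW : forall p, on_sphere p ->
            (1 - m1) * dot p b1 + (1 - m2) * dot p b2 + (1 - m3) * dot p b3 = 0).
  { intros p hp. destruct on_sphere_bhat as (s1 & s2 & s3).
    pose proof (weighted_sqdist_bhat p hp) as e.
    rewrite !sqdist_on_sphere in e by assumption. lra. }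
  pose proof (hW (mkV3 1 0 0) ltac:(unfold on_sphere, dot; simpl; ring)) as ex.
  pose proof (hW (mkV3 0 1 0) ltac:(unfold on_sphere, dot; simpl; ring)) as ey.
  unfold dot in ex, ey; cbn [vx vy vz] in ex, ey. split; lra.
Qed.

Lemma sides_equal_sqdist p : on_sphere p -> sides_equal p ->
  sqdist p b1 = chord_scale m1 (m2 * m3) / (m1 * m2 + m2 * m3 + m3 * m1)
  /\ sqdist p b2 = chord_scale m2 (m3 * m1) / (m1 * m2 + m2 * m3 + m3 * m1).
Proof.
  intros hp [e12 e23].
  pose proof (chord_scale_pos m1 (m2 * m3) m1_lt_1 m23_pos).
  pose proof (chord_scale_pos m2 (m3 * m1) m2_lt_1 m31_pos).
  pose proof (chord_scale_pos m3 (m1 * m2) m3_lt_1 m12_pos).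
  set (mu := sqdist p b1 / chord_scale m1 (m2 * m3)) in *.
  assert (d1 : sqdist p b1 = chord_scale m1 (m2 * m3) * mu) by (unfold mu; field; lra).
  assert (d2 : sqdist p b2 = chord_scale m2 (m3 * m1) * mu) by (rewrite e12; field; lra).
  assert (d3 : sqdist p b3 = chord_scale m3 (m1 * m2) * mu) by (rewrite e12, e23; field; lra).
  pose proof (weighted_sqdist_bhat p hp) as w.
  rewrite d1, d2, d3, !chord_scale_weighted in w by lra.
  assert (hmu : mu = / (m1 * m2 + m2 * m3 + m3 * m1)).
  { apply Rmult_eq_reg_l with (m1 * m2 + m2 * m3 + m3 * m1); [| lra].
    rewrite Rinv_r by lra. lra. }
  rewrite d1, d2, hmu. split; unfold Rdiv; reflexivity.
Qed.

Lemma equilateral_shape_mirror_cases p q :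
  equilateral_shape m1 m2 m3 p -> equilateral_shape m1 m2 m3 q -> q = p \/ q = mirror p.
Proof.
  rewrite !equilateral_shape_iff. intros [hp sp] [hq sq].
  destruct on_sphere_bhat as (s1 & s2 & _). destruct vz_bhat as (z1 & z2 & _).
  destruct (sides_equal_sqdist p hp sp) as [dp1 dp2].
  destruct (sides_equal_sqdist q hq sq) as [dq1 dq2].
  rewrite sqdist_on_sphere in dp1, dp2, dq1, dq2 by assumption.
  destruct (equator_dots_determine_xy b1 b2 p q z1 z2 bhat12_independent) as [ex ey];
    [lra | lra |].
  exact (on_sphere_mirror_cases p q hp hq ex ey).
Qed.

(* The triangle (0,0), (2,0), (1,h), translated to its centre of mass (gx, gy) and scaled by l:
   its moment of inertia about the centre is sum m_j m_k r_jk^2 = 4 (m1 m2 + m2 m3 + m3 m1). *)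
Definition equilateral_config (h : R) : Config :=
  let l := / sqrt (4 * (m1 * m2 + m2 * m3 + m3 * m1)) in
  let gx := 2 * m2 + m3 in let gy := m3 * h in
  mkConfig (l * (0 - gx)) (l * (0 - gy)) (l * (2 - gx)) (l * (0 - gy))
           (l * (1 - gx)) (l * (h - gy)).

Lemma equilateral_config_spec h : h * h = 3 ->
  normalized m1 m2 m3 (equilateral_config h) /\ equilateral (equilateral_config h).
Proof.
  intros hh. unfold normalized, equilateral, equilateral_config; simpl.
  assert (hsig : 0 < 4 * (m1 * m2 + m2 * m3 + m3 * m1)) by lra.
  pose proof (Rinv_sqrt_sq _ hsig) as hl.
  set (l := / sqrt (4 * (m1 * m2 + m2 * m3 + m3 * m1))) in *. clearbody l.
  repeat split.
  - transitivity (l * (2 * m2 + m3) * (1 - (m1 + m2 + m3))); [ring | rewrite hsum; ring].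
  - transitivity (l * (m3 * h) * (1 - (m1 + m2 + m3))); [ring | rewrite hsum; ring].
  - transitivity ((l * l) * (4 * m2 + m3 + m3 * (h * h) - (2 * m2 + m3) ^ 2 - m3 ^ 2 * (h * h)
        + (m1 + m2 + m3 - 1) * ((2 * m2 + m3) ^ 2 + m3 ^ 2 * (h * h)))); [ring |].
    rewrite hl, hh, hsum.
    replace (4 * m2 + m3 + m3 * 3 - (2 * m2 + m3) ^ 2 - m3 ^ 2 * 3
             + (1 - 1) * ((2 * m2 + m3) ^ 2 + m3 ^ 2 * 3))
      with (4 * (m1 * m2 + m2 * m3 + m3 * m1)) by (replace m1 with (1 - m2 - m3) by lra; ring).
    field. lra.
  - transitivity (l * l * (1 + 3)); [ring | rewrite <- hh; ring].
  - ring.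
Qed.

Lemma vz_shape_equilateral_config h : h * h = 3 ->
  vz (shp (equilateral_config h)) * h < 0.
Proof.
  intros hh. destruct (equilateral_config_spec h hh) as [hc _].
  rewrite shape_centered by (apply centered_normalized, hc).
  unfold hopf, jacobi1x, jacobi1y, jacobi2x, jacobi2y, equilateral_config; simpl.
  pose proof (coll_scale_pos m1 ltac:(lra)). pose proof jscale2_pos.
  assert (0 < / sqrt (4 * (m1 * m2 + m2 * m3 + m3 * m1))) by (apply Rinv_sqrt_pos; lra).
  set (l := / sqrt (4 * (m1 * m2 + m2 * m3 + m3 * m1))) in *.
  set (u := coll_scale m1 * jscale2 * (l * l) * (m1 * m2 * m3) * (m2 + m3)).
  assert (0 < u) by (unfold u; repeat apply Rmult_lt_0_compat; lra).
  match goal with |- ?a < 0 => replace a with (- (4 * u) * (h * h)) by (unfold u; ring) end.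
  rewrite hh. lra.
Qed.

Lemma equilateral_shapes_pair : exists p0plus p0minus : V3,
  0 < vz p0plus /\ vz p0minus < 0 /\
  (forall p, equilateral_shape m1 m2 m3 p <-> p = p0plus \/ p = p0minus).
Proof.
  assert (hh : sqrt 3 * sqrt 3 = 3) by (apply sqrt_sqrt; lra).
  assert (hpos : 0 < sqrt 3) by (apply sqrt_lt_R0; lra).
  assert (hh' : - sqrt 3 * - sqrt 3 = 3) by lra.
  pose proof (vz_shape_equilateral_config _ hh'). pose proof (vz_shape_equilateral_config _ hh).
  set (pplus := shp (equilateral_config (- sqrt 3))) in *.
  set (pminus := shp (equilateral_config (sqrt 3))) in *.
  assert (zp : 0 < vz pplus) by nra. assert (zm : vz pminus < 0) by nra.
  assert (ep : equilateral_shape m1 m2 m3 pplus)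
    by (destruct (equilateral_config_spec _ hh'); eexists; eauto).
  assert (em : equilateral_shape m1 m2 m3 pminus)
    by (destruct (equilateral_config_spec _ hh); eexists; eauto).
  exists pplus, pminus. repeat split; [exact zp | exact zm | | ].
  - intros eq.
    destruct (equilateral_shape_mirror_cases pplus pminus ep em) as [e | e];
      [rewrite e in zm; lra |].
    destruct (equilateral_shape_mirror_cases pplus p ep eq) as [-> | ->];
      [left | right]; congruence.
  - intros [-> | ->]; assumption.
Qed.

Lemma vz_Bvec p : vz (Bvec m1 m2 m3 p) = 0.
Proof.
  destruct vz_bhat as (z1 & z2 & z3).
  unfold Bvec, vadd, vscale; cbn [vz]. rewrite z1, z2, z3. ring.
Qed.

Lemma Bvec_eq0_iff_sides_equal p : p <> b1 -> p <> b2 -> p <> b3 ->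
  (Bvec m1 m2 m3 p = vzero <-> sides_equal p).
Proof.
  intros n1 n2 n3.
  destruct (inverse_cube_weight_balance m1 (m2 * m3) p b1 ltac:(lra) m23_pos n1) as (q1 & r1 & e1).
  destruct (inverse_cube_weight_balance m2 (m3 * m1) p b2 ltac:(lra) m31_pos n2) as (q2 & r2 & e2).
  destruct (inverse_cube_weight_balance m3 (m1 * m2) p b3 ltac:(lra) m12_pos n3) as (q3 & r3 & e3).
  unfold sides_equal.
  rewrite <- (sq_cube_balance_eq_iff _ _ _ _ q1 q2 r1 r2 (eq_trans e1 (eq_sym e2))).
  rewrite <- (sq_cube_balance_eq_iff _ _ _ _ q2 q3 r2 r3 (eq_trans e2 (eq_sym e3))).
  destruct bhat_weighted_sum as [wx wy].
  assert (a1 : 1 - m1 <> 0) by lra. assert (a2 : 1 - m2 <> 0) by lra.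
  assert (a3 : 1 - m3 <> 0) by lra.
  rewrite <- (lincomb3_eq0_iff_proportional _ _ _ _ _ _ _ _ _ _ _ _
                a1 a2 a3 bhat12_independent wx wy).
  rewrite (horizontal_eq0_iff _ (vz_Bvec p)).
  unfold Bvec, vadd, vscale, k1, k2, k3; cbn [vx vy].
  split; intros [ex ey]; split; lra.
Qed.

Lemma Bvec_eq0_iff_equilateral_shape p : on_sphere p -> p <> b1 -> p <> b2 -> p <> b3 ->
  (Bvec m1 m2 m3 p = vzero <-> equilateral_shape m1 m2 m3 p).
Proof.
  intros hp n1 n2 n3.
  rewrite Bvec_eq0_iff_sides_equal, equilateral_shape_iff by assumption. tauto.
Qed.

Lemma great_circle_Ustar_derivative p v : p <> b1 -> p <> b2 -> p <> b3 -> dot p v = 0 ->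
  derivable_pt_lim (fun t => Ustar m1 m2 m3 (vadd (vscale (cos t) p) (vscale (sin t) v))) 0
    (dot (Bvec m1 m2 m3 p) v).
Proof.
  intros n1 n2 n3 hpv.
  pose proof (great_circle_inv_dist_derivative (k1 m1 m2 m3) p v b1 (sqdist_pos _ _ n1)) as d1.
  pose proof (great_circle_inv_dist_derivative (k2 m1 m2 m3) p v b2 (sqdist_pos _ _ n2)) as d2.
  pose proof (great_circle_inv_dist_derivative (k3 m1 m2 m3) p v b3 (sqdist_pos _ _ n3)) as d3.
  pose proof (derivable_pt_lim_plus _ _ _ _ _ (derivable_pt_lim_plus _ _ _ _ _ d1 d2) d3) as d.
  unfold plus_fct in d. unfold Ustar.
  replace (dot (Bvec m1 m2 m3 p) v) with
    (k1 m1 m2 m3 * (dot b1 v - dot p v) / vnorm (vsub p b1) ^ 3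
     + k2 m1 m2 m3 * (dot b2 v - dot p v) / vnorm (vsub p b2) ^ 3
     + k3 m1 m2 m3 * (dot b3 v - dot p v) / vnorm (vsub p b3) ^ 3); [exact d |].
  rewrite hpv. unfold Bvec, dot, vadd, vscale; cbn [vx vy vz]. field.
  rewrite !vnorm_vsub.
  repeat split; apply Rgt_not_eq, sqrt_lt_R0, sqdist_pos; assumption.
Qed.

Lemma sphere_critical_Ustar_iff p : p <> b1 -> p <> b2 -> p <> b3 ->
  (sphere_critical (Ustar m1 m2 m3) p
   <-> forall v, dot v p = 0 -> dot v v = 1 -> dot (Bvec m1 m2 m3 p) v = 0).
Proof.
  intros n1 n2 n3. unfold sphere_critical.
  split; intros h v hvp hvv;
    assert (hpv : dot p v = 0) by (rewrite <- hvp; unfold dot; ring);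
    pose proof (great_circle_Ustar_derivative p v n1 n2 n3 hpv) as d.
  - exact (uniqueness_limite _ _ _ _ d (h v hvp hvv)).
  - rewrite (h v hvp hvv) in d. exact d.
Qed.

Lemma sphere_critical_Ustar_iff_Bvec_eq0 p : vz p <> 0 ->
  (sphere_critical (Ustar m1 m2 m3) p <-> Bvec m1 m2 m3 p = vzero).
Proof.
  intros hz. destruct (neq_bhat_of_vz p hz) as (n1 & n2 & n3).
  rewrite sphere_critical_Ustar_iff by assumption.
  split.
  - intros h. apply (horizontal_normal_eq0 _ p hz (vz_Bvec p)).
    exact (dot_eq0_of_unit_tangents _ _ h).
  - intros -> v _ _. unfold dot, vzero; cbn [vx vy vz]. ring.
Qed.

End ShapeSphere.

Theorem mainTheorem18 (m1 m2 m3 : R) :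
  0 < m1 -> 0 < m2 -> 0 < m3 -> m1 + m2 + m3 = 1 ->
  (* the two physical centers: equilateral shapes, one on each hemisphere *)
  (exists p0plus p0minus : V3,
      0 < vz p0plus /\ vz p0minus < 0 /\
      (forall p, equilateral_shape m1 m2 m3 p <-> p = p0plus \/ p = p0minus)) /\
  (* they are exactly the critical points of U^* off the equator *)
  (forall p : V3, on_sphere p -> vz p <> 0 ->
      (sphere_critical (Ustar m1 m2 m3) p <-> equilateral_shape m1 m2 m3 p)) /\
  (* and exactly the zeros of B on the sphere (away from collision points) *)
  (forall p : V3, on_sphere p ->
      p <> bhat1 m1 m2 m3 -> p <> bhat2 m1 m2 m3 -> p <> bhat3 m1 m2 m3 ->
      (Bvec m1 m2 m3 p = vzero <-> equilateral_shape m1 m2 m3 p)).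
Proof.
  intros h1 h2 h3 hm. split; [| split].
  - apply equilateral_shapes_pair; assumption.
  - intros p hp hz. destruct (neq_bhat_of_vz m1 m2 m3 p hz) as (n1 & n2 & n3).
    rewrite sphere_critical_Ustar_iff_Bvec_eq0 by assumption.
    apply Bvec_eq0_iff_equilateral_shape; assumption.
  - intros p hp n1 n2 n3. apply Bvec_eq0_iff_equilateral_shape; assumption.
Qed.
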